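(* Let $X$ be a connected $G$-complex on which $G$ acts properly and cocompactly. Then any $G$-equivariant immersion $\phi\colon X\to X$ is an isomorphism.
   Context: Complexes are combinatorial 2-complexes and maps are combinatorial; a $G$-complex has a cellular $G$-action without inversions. An immersion is a locally injective combinatorial map. *)

From Stdlib Require Import List Relations.

Record Group := {
  gcar :> Type;
  gmul : gcar -> gcar -> gcar;
  gone : gcar;
  ginv : gcar -> gcar;
  gmulA : forall a b c, gmul a (gmul b c) = gmul (gmul a b) c;
  gmul1 : forall a, gmul gone a = a;
  gmulV : forall a, gmul (ginv a) a = gone
}.

(** * Combinatorial 2-complexes
    - [V]: vertices; [D]: darts (oriented edges), [rev] reverses a dart
      (a fixed-point-free involution), [src] its initial vertex;
      an (unoriented) edge is a pair {d, rev d}.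
    - [F]: 2-cells. Each 2-cell is a polygon attached along a closed
      combinatorial path.  [S] is the set of *oriented sides* of the
      2-cells: a 2-cell whose boundary path has length n has 2n oriented
      sides (n for each of the two orientations of the polygon).
      [lab s] is the dart traversed by the side [s], [nxt s] is the next side
      in the same orientation, [flip s] is the same side traversed in the
      opposite orientation, and [cell s] the 2-cell it bounds. *)
Record complex := {
  V : Type; D : Type; S : Type; F : Type;
  src : D -> V;
  rev : D -> D;
  lab : S -> D;
  nxt : S -> S;
  flip : S -> S;
  cell : S -> F;
  rev_involutive : forall d, rev (rev d) = d;
  rev_nofix : forall d, rev d <> d;
  nxt_path : forall s, src (lab (nxt s)) = src (rev (lab s));
  nxt_periodic : forall s, exists n, 0 < n /\ Nat.iter n nxt s = s;
  flip_involutive : forall s, flip (flip s) = s;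
  flip_lab : forall s, lab (flip s) = rev (lab s);
  flip_nxt : forall s, nxt (flip (nxt s)) = flip s;
  flip_other_orientation : forall s n, Nat.iter n nxt s <> flip s;
  cell_nxt : forall s, cell (nxt s) = cell s;
  cell_flip : forall s, cell (flip s) = cell s;
  cell_sides : forall s t, cell s = cell t ->
     exists n, t = Nat.iter n nxt s \/ t = Nat.iter n nxt (flip s);
  cell_nonempty : forall f, exists s, cell s = f
}.

Arguments src {_} _.  Arguments rev {_} _.  Arguments lab {_} _.
Arguments nxt {_} _.  Arguments flip {_} _.  Arguments cell {_} _.

(** Combinatorial maps: cells go to cells of the same dimension, and each
    2-cell is mapped bijectively (homeomorphically) onto a 2-cell,
    possibly reversing its orientation (via [flip]). *)
Record is_cmap (X Y : complex) (fV : V X -> V Y) (fD : D X -> D Y)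
    (fS : S X -> S Y) (fF : F X -> F Y) : Prop := {
  cm_src : forall d, src (fD d) = fV (src d);
  cm_rev : forall d, fD (rev d) = rev (fD d);
  cm_lab : forall s, lab (fS s) = fD (lab s);
  cm_nxt : forall s, fS (nxt s) = nxt (fS s);
  cm_flip : forall s, fS (flip s) = flip (fS s);
  cm_cell : forall s, cell (fS s) = fF (cell s);
  cm_cell_inj : forall s t, cell s = cell t -> fS s = fS t -> s = t
}.

(** Immersion = locally injective combinatorial map, i.e. injective on the
    link of every vertex: injective on the darts issuing from a vertex
    (link vertices) and on the (oriented) corners of 2-cells at a vertex
    (link edges; the oriented side [s] represents the corner between the
    side preceding [s] and [s], at the vertex [src (lab s)]). *)
Definition is_immersion (X Y : complex) fV fD fS fF : Prop :=
  is_cmap X Y fV fD fS fF /\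
  (forall d d', src d = src d' -> fD d = fD d' -> d = d') /\
  (forall s s', src (lab s) = src (lab s') -> fS s = fS s' -> s = s').

Definition bij {A B : Type} (f : A -> B) : Prop :=
  exists g : B -> A, (forall a, g (f a) = a) /\ (forall b, f (g b) = b).

(** Isomorphism: a combinatorial map bijective on cells of every dimension
    (its inverse is then automatically combinatorial). *)
Definition is_iso (X Y : complex) fV fD fS fF : Prop :=
  is_cmap X Y fV fD fS fF /\ bij fV /\ bij fD /\ bij fS /\ bij fF.

Definition adjacent (X : complex) (u v : V X) : Prop :=
  exists d : D X, src d = u /\ src (rev d) = v.

Definition connected (X : complex) : Prop :=
  forall u v : V X, clos_refl_trans (V X) (adjacent X) u v.

Record Gcomplex (G : Group) (X : complex) := {
  aV : G -> V X -> V X;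
  aD : G -> D X -> D X;
  aS : G -> S X -> S X;
  aF : G -> F X -> F X;
  act_cmap : forall g, is_cmap X X (aV g) (aD g) (aS g) (aF g);
  act_oneV : forall v, aV (gone G) v = v;
  act_oneD : forall d, aD (gone G) d = d;
  act_oneS : forall s, aS (gone G) s = s;
  act_oneF : forall f, aF (gone G) f = f;
  act_mulV : forall g h v, aV (gmul G g h) v = aV g (aV h v);
  act_mulD : forall g h d, aD (gmul G g h) d = aD g (aD h d);
  act_mulS : forall g h s, aS (gmul G g h) s = aS g (aS h s);
  act_mulF : forall g h f, aF (gmul G g h) f = aF g (aF h f);
  act_no_inversion : forall g d, aD g d <> rev d
}.

Arguments aV {G X} _ _ _.  Arguments aD {G X} _ _ _.
Arguments aS {G X} _ _ _.  Arguments aF {G X} _ _ _.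

Definition finite_set {T : Type} (P : T -> Prop) : Prop :=
  exists l : list T, forall x, P x -> In x l.

Definition proper_action {G X} (A : Gcomplex G X) : Prop :=
  (forall v, finite_set (fun g : G => aV A g v = v)) /\
  (forall d, finite_set (fun g : G => aD A g d = d)) /\
  (forall f, finite_set (fun g : G => aF A g f = f)).

Definition cocompact_action {G X} (A : Gcomplex G X) : Prop :=
  (exists l : list (V X), forall v, exists g v0, In v0 l /\ v = aV A g v0) /\
  (exists l : list (D X), forall d, exists g d0, In d0 l /\ d = aD A g d0) /\
  (exists l : list (F X), forall f, exists g f0, In f0 l /\ f = aF A g f0).

Definition equivariant {G X} (A : Gcomplex G X) fV fD fS fF : Prop :=
  (forall g v, fV (aV A g v) = aV A g (fV v)) /\
  (forall g d, fD (aD A g d) = aD A g (fD d)) /\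
  (forall g s, fS (aS A g s) = aS A g (fS s)) /\
  (forall g f, fF (aF A g f) = aF A g (fF f)).

From Stdlib Require Import List Arith Lia Classical IndefiniteDescription FinFun.

(* Call a vertex v periodic if f^k v = h v for some k > 0 and h in G.  By
   cocompactness some iterate f^a v lies in the G-orbit of an earlier one, so is
   periodic.  If f^k u = h u, then h^-1 f^k is an injective self-map of the link
   of u, which is finite by properness and cocompactness; hence some power of it
   fixes each dart d at u, so the other endpoint of d is periodic as well.  By
   connectedness every vertex is periodic.  For periodic v, conjugation by h is
   an injective self-map of the finite stabilizer of v that sends Stab(f v)
   into Stab(v); so Stab(f v) = Stab(v), and f is injective on vertices, hence,
   being locally injective, on all cells.  Finally an injective equivariant
   self-map of a G-set with finitely many orbits is onto: two iterates of any
   point fall in the same orbit. *)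

Lemma gmulVr (G : Group) (a : G) : gmul G a (ginv G a) = gone G.
Proof.
  transitivity (gmul G (gmul G (ginv G (ginv G a)) (ginv G a)) (gmul G a (ginv G a))).
  - rewrite gmulV, gmul1; reflexivity.
  - rewrite <- gmulA, (gmulA G (ginv G a) a), gmulV, gmul1. apply gmulV.
Qed.

Lemma gmul1r (G : Group) (a : G) : gmul G a (gone G) = a.
Proof. rewrite <- (gmulV G a), gmulA, gmulVr, gmul1; reflexivity. Qed.

Lemma gmulI (G : Group) (a b c : G) : gmul G a b = gmul G a c -> b = c.
Proof.
  intro H. rewrite <- (gmul1 G b), <- (gmul1 G c), <- (gmulV G a), <- !gmulA, H.
  reflexivity.
Qed.

Lemma gmulIr (G : Group) (a b c : G) : gmul G b a = gmul G c a -> b = c.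
Proof.
  intro H. rewrite <- (gmul1r G b), <- (gmul1r G c), <- (gmulVr G a), !gmulA, H.
  reflexivity.
Qed.

Lemma bij_of_Injective_Surjective {A B : Type} (f : A -> B) :
  Injective f -> Surjective f -> bij f.
Proof.
  intros f_inj f_surj.
  exists (fun b => proj1_sig (constructive_indefinite_description _ (f_surj b))).
  split.
  - intro a. destruct (constructive_indefinite_description _ (f_surj (f a))); auto.
  - intro b. destruct (constructive_indefinite_description _ (f_surj b)); auto.
Qed.

Lemma finite_set_bigcup {I T : Type} (l : list I) (P : I -> T -> Prop) :
  (forall i, In i l -> finite_set (P i)) ->
  finite_set (fun x => exists i, In i l /\ P i x).
Proof.
  induction l as [|i l IH]; intro finP.
  - exists nil. intros x [i [[] _]].
  - destruct (finP i (in_eq i l)) as [li Hli].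
    destruct IH as [lrest Hlrest]; [intros j Hj; apply finP; right; exact Hj|].
    exists (li ++ lrest). intros x [j [[<-|Hj] Px]]; apply in_or_app; auto.
    right. apply Hlrest. exists j; auto.
Qed.

Lemma pigeonhole_seq {T : Type} (u : nat -> T) (l : list T) :
  (forall i, In (u i) l) -> exists a b, a < b /\ u a = u b.
Proof.
  intro u_in. apply NNPP; intro no_repeat.
  set (n := Datatypes.S (length l)).
  assert (nodup : NoDup (map u (seq 0 n))).
  { apply NoDup_map_NoDup_ForallPairs; [|apply seq_NoDup].
    intros a b _ _ Hab. destruct (Nat.lt_trichotomy a b) as [lt|[eq|gt]]; auto;
      exfalso; apply no_repeat; eauto. }
  assert (incl_l : incl (map u (seq 0 n)) l).
  { intros x Hx. apply in_map_iff in Hx as [i [<- _]]. apply u_in. }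
  pose proof (NoDup_incl_length nodup incl_l) as Hlen.
  rewrite length_map, length_seq in Hlen. unfold n in Hlen. lia.
Qed.

Section FiniteSelfMap.
Context {T : Type}.
Variables (P : T -> Prop) (f : T -> T).
Hypothesis P_finite : finite_set P.
Hypothesis f_maps : forall x, P x -> P (f x).
Hypothesis f_inj : forall x y, P x -> P y -> f x = f y -> x = y.

Lemma iter_maps n x : P x -> P (Nat.iter n f x).
Proof. induction n; simpl; auto. Qed.

Lemma iter_inj_on n x y : P x -> P y -> Nat.iter n f x = Nat.iter n f y -> x = y.
Proof.
  revert x y; induction n as [|n IH]; simpl; intros x y Px Py E; auto.
  apply IH; auto. apply f_inj; auto using iter_maps.
Qed.

Lemma finite_self_map_return x : P x -> exists j, 0 < j /\ Nat.iter j f x = x.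
Proof.
  intro Px. destruct P_finite as [l Hl].
  destruct (pigeonhole_seq (fun i => Nat.iter i f x) l (fun i => Hl _ (iter_maps i x Px)))
    as [a [b [ab E]]].
  exists (b - a). split; [lia|].
  replace b with (a + (b - a)) in E by lia. rewrite Nat.iter_add in E.
  symmetry. apply (iter_inj_on a); auto using iter_maps.
Qed.

Lemma finite_self_map_onto y : P y -> exists x, P x /\ f x = y.
Proof.
  intro Py. destruct (finite_self_map_return y Py) as [[|j] [j_pos E]]; [lia|].
  exists (Nat.iter j f y). split; auto using iter_maps.
Qed.

End FiniteSelfMap.

Section Action.
Context {G : Group} {T : Type} {act : G -> T -> T}.
Hypothesis act1 : forall x, act (gone G) x = x.
Hypothesis actM : forall g h x, act (gmul G g h) x = act g (act h x).

Lemma actK g x : act (ginv G g) (act g x) = x.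
Proof. rewrite <- actM, gmulV, act1; reflexivity. Qed.

Lemma act_inj g : Injective (act g).
Proof. intros x y E. rewrite <- (actK g x), E, actK; reflexivity. Qed.

Definition finitely_many_orbits : Prop :=
  exists L : list T, forall x, exists g y, In y L /\ x = act g y.

Lemma orbit_repeat (u : nat -> T) :
  finitely_many_orbits -> exists a b h, a < b /\ u b = act h (u a).
Proof.
  intros [L HL].
  assert (rep : forall i, exists p : G * T, In (snd p) L /\ u i = act (fst p) (snd p)).
  { intro i. destruct (HL (u i)) as [g [y [Hy E]]]. exists (g, y); auto. }
  set (r := fun i => proj1_sig (constructive_indefinite_description _ (rep i))).
  assert (Hr : forall i, In (snd (r i)) L /\ u i = act (fst (r i)) (snd (r i))).
  { intro i. unfold r. destruct (constructive_indefinite_description _ (rep i)); auto. }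
  destruct (pigeonhole_seq (fun i => snd (r i)) L (fun i => proj1 (Hr i)))
    as [a [b [ab E]]].
  exists a, b, (gmul G (fst (r b)) (ginv G (fst (r a)))). split; auto.
  rewrite actM, (proj2 (Hr a)), actK, (proj2 (Hr b)), E; reflexivity.
Qed.

Variable f : T -> T.
Hypothesis f_equiv : forall g x, f (act g x) = act g (f x).

Lemma iter_equiv n g x : Nat.iter n f (act g x) = act g (Nat.iter n f x).
Proof. symmetry. apply Nat.iter_swap_gen. intro; symmetry; apply f_equiv. Qed.

Definition periodic (x : T) : Prop :=
  exists k h, 0 < k /\ Nat.iter k f x = act h x.

Lemma twisted_iter_in_orbit k h j x :
  exists g, Nat.iter j (fun y => act h (Nat.iter k f y)) x = act g (Nat.iter (k * j) f x).
Proof.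
  induction j as [|j [g IH]].
  - exists (gone G). rewrite Nat.mul_0_r, act1. reflexivity.
  - exists (gmul G h g). replace (k * Datatypes.S j) with (k + k * j) by lia.
    simpl. rewrite IH, Nat.iter_add, iter_equiv, actM. reflexivity.
Qed.

Lemma twisted_iter_return k h j x :
  Nat.iter j (fun y => act h (Nat.iter k f y)) x = x ->
  exists g, Nat.iter (k * j) f x = act g x.
Proof.
  intro E. destruct (twisted_iter_in_orbit k h j x) as [g Hg].
  exists (ginv G g). rewrite <- E at 2. rewrite Hg, actK. reflexivity.
Qed.

Lemma iter_mul_in_orbit k h x :
  Nat.iter k f x = act h x -> forall j, exists g, Nat.iter (k * j) f x = act g x.
Proof.
  intros E j. apply (twisted_iter_return k (ginv G h)).
  induction j as [|j IH]; simpl; [reflexivity|].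
  rewrite IH, E, actK. reflexivity.
Qed.

Lemma periodic_iter_exists x : finitely_many_orbits -> exists a, periodic (Nat.iter a f x).
Proof.
  intro orbits.
  destruct (orbit_repeat (fun i => Nat.iter i f x) orbits) as [a [b [h [ab E]]]].
  exists a, (b - a), h. split; [lia|].
  rewrite <- Nat.iter_add. replace (b - a + a) with b by lia. exact E.
Qed.

Lemma equivariant_Injective_Surjective : finitely_many_orbits -> Injective f -> Surjective f.
Proof.
  intros orbits f_inj y.
  destruct (orbit_repeat (fun i => Nat.iter i f y) orbits) as [a [b [h [ab E]]]].
  simpl in E. replace b with (a + (b - a)) in E by lia.
  rewrite Nat.iter_add, <- iter_equiv in E.
  apply (iter_inj_on (fun _ => True) f (fun _ _ => I) (fun x y _ _ => f_inj x y) a)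
    in E; auto.
  destruct (b - a) as [|m] eqn:Hm; [lia|].
  exists (act (ginv G h) (Nat.iter m f y)). simpl in E.
  rewrite f_equiv, E, actK. reflexivity.
Qed.

Definition stabilizer (x : T) : G -> Prop := fun g => act g x = x.

Lemma stabilizer_f_sub x :
  periodic x -> finite_set (stabilizer x) ->
  forall g, stabilizer (f x) g -> stabilizer x g.
Proof.
  intros [k [h [k_pos Eh]]] stab_fin g Hg.
  set (c := fun a => gmul G (ginv G h) (gmul G a h)).
  assert (c_stab : forall a, stabilizer (Nat.iter k f x) a -> stabilizer x (c a)).
  { intros a Ha. unfold c, stabilizer in *. rewrite !actM, <- Eh, Ha, Eh, actK. reflexivity. }
  assert (c_maps : forall a, stabilizer x a -> stabilizer x (c a)).
  { intros a Ha. apply c_stab. unfold stabilizer in *. rewrite <- iter_equiv, Ha. reflexivity. }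
  assert (c_inj : forall a b, c a = c b -> a = b).
  { unfold c; intros a b E. apply gmulI in E. apply gmulIr in E. exact E. }
  assert (c_g : stabilizer x (c g)).
  { apply c_stab. destruct k as [|k]; [lia|]. unfold stabilizer in *.
    rewrite Nat.iter_succ_r, <- iter_equiv, Hg. reflexivity. }
  destruct (finite_self_map_onto (stabilizer x) c stab_fin c_maps
              (fun a b _ _ => c_inj a b) (c g) c_g)
    as [a [Ha E]].
  apply c_inj in E. subst a. exact Ha.
Qed.

Lemma equivariant_Injective :
  (forall x, periodic x) -> (forall x, finite_set (stabilizer x)) -> Injective f.
Proof.
  intros per stab_fin x y E.
  destruct (per x) as [k1 [h1 [k1_pos E1]]].
  destruct (per y) as [k2 [h2 [k2_pos E2]]].
  destruct (iter_mul_in_orbit k1 h1 x E1 k2) as [g1 Hx].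
  destruct (iter_mul_in_orbit k2 h2 y E2 k1) as [g2 Hy].
  rewrite Nat.mul_comm in Hy.
  destruct (k1 * k2) as [|K] eqn:HK; [nia|].
  rewrite Nat.iter_succ_r, E, <- Nat.iter_succ_r, Hy in Hx.
  assert (y_eq : y = act (gmul G (ginv G g2) g1) x).
  { rewrite actM, <- Hx, actK. reflexivity. }
  rewrite y_eq. symmetry. apply (stabilizer_f_sub x (per x) (stab_fin x)).
  unfold stabilizer. rewrite <- f_equiv, <- y_eq. symmetry. exact E.
Qed.

End Action.

Arguments periodic {G T} act f x.
Arguments stabilizer {G T} act x g.
Arguments finitely_many_orbits {G T} act.

Lemma cell_iter_nxt (X : complex) n (s : S X) : cell (Nat.iter n nxt s) = cell s.
Proof. induction n as [|n IH]; simpl; [|rewrite cell_nxt]; auto. Qed.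

Section CombinatorialMap.
Context {X Y : complex} {fV : V X -> V Y} {fD : D X -> D Y}.
Context {fS : S X -> S Y} {fF : F X -> F Y}.
Hypothesis f_cmap : is_cmap X Y fV fD fS fF.

Lemma cmap_iter_nxt n s : fS (Nat.iter n nxt s) = Nat.iter n nxt (fS s).
Proof. apply Nat.iter_swap_gen, (cm_nxt _ _ _ _ _ _ f_cmap). Qed.

Lemma cmap_Injective_D :
  Injective fV -> (forall d d', src d = src d' -> fD d = fD d' -> d = d') -> Injective fD.
Proof.
  intros fV_inj link_inj d d' E. apply link_inj; auto. apply fV_inj.
  rewrite <- !(cm_src _ _ _ _ _ _ f_cmap), E. reflexivity.
Qed.

Lemma cmap_Injective_S :
  Injective fD -> (forall s s', src (lab s) = src (lab s') -> fS s = fS s' -> s = s') ->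
  Injective fS.
Proof.
  intros fD_inj corner_inj s s' E. apply corner_inj; auto. f_equal. apply fD_inj.
  rewrite <- !(cm_lab _ _ _ _ _ _ f_cmap), E. reflexivity.
Qed.

Lemma cmap_Injective_F : Injective fS -> Injective fF.
Proof.
  intros fS_inj c c' E.
  destruct (cell_nonempty X c) as [s <-]. destruct (cell_nonempty X c') as [s' <-].
  rewrite <- !(cm_cell _ _ _ _ _ _ f_cmap) in E.
  destruct (cell_sides Y _ _ E) as [n [En|En]].
  - rewrite <- cmap_iter_nxt in En. apply fS_inj in En. subst s'.
    rewrite cell_iter_nxt. reflexivity.
  - rewrite <- (cm_flip _ _ _ _ _ _ f_cmap), <- cmap_iter_nxt in En. apply fS_inj in En.
    subst s'. rewrite cell_iter_nxt, cell_flip. reflexivity.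
Qed.

Lemma cmap_Surjective_S : Surjective fF -> Surjective fS.
Proof.
  intros fF_surj t. destruct (fF_surj (cell t)) as [c Ec].
  destruct (cell_nonempty X c) as [s <-].
  rewrite <- (cm_cell _ _ _ _ _ _ f_cmap) in Ec.
  destruct (cell_sides Y _ _ Ec) as [n [En|En]].
  - exists (Nat.iter n nxt s). rewrite cmap_iter_nxt. symmetry. exact En.
  - exists (Nat.iter n nxt (flip s)).
    rewrite cmap_iter_nxt, (cm_flip _ _ _ _ _ _ f_cmap). symmetry. exact En.
Qed.

End CombinatorialMap.

Section GcomplexLink.
Variables (G : Group) (X : complex) (A : Gcomplex G X).

Lemma aD_src g d : src (aD A g d) = aV A g (src d).
Proof. apply (cm_src _ _ _ _ _ _ (act_cmap G X A g)). Qed.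

Lemma finite_link_orbit (v : V X) (d0 : D X) :
  finite_set (stabilizer (aV A) (src d0)) ->
  finite_set (fun d => src d = v /\ exists g, d = aD A g d0).
Proof.
  intros [l Hl].
  destruct (classic (exists g0, aV A g0 (src d0) = v)) as [[g0 E0]|no_g].
  - exists (map (fun a => aD A (gmul G g0 a) d0) l).
    intros d [Hv [g ->]]. apply in_map_iff. exists (gmul G (ginv G g0) g). split.
    + rewrite gmulA, gmulVr, gmul1. reflexivity.
    + apply Hl. unfold stabilizer.
      rewrite act_mulV, <- aD_src, Hv, <- E0, (actK (act_oneV G X A) (act_mulV G X A)).
      reflexivity.
  - exists nil. intros d [Hv [g ->]]. apply no_g. exists g. rewrite <- aD_src. exact Hv.
Qed.

Lemma finite_link :
  (forall v, finite_set (stabilizer (aV A) v)) -> finitely_many_orbits (aD A) ->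
  forall v : V X, finite_set (fun d : D X => src d = v).
Proof.
  intros stab_fin [L HL] v.
  destruct (finite_set_bigcup L (fun d0 d => src d = v /\ exists g, d = aD A g d0)
              (fun d0 _ => finite_link_orbit v d0 (stab_fin (src d0)))) as [l Hl].
  exists l. intros d Hv. apply Hl.
  destruct (HL d) as [g [d0 [Hd0 ->]]]. exists d0. split; [|split]; eauto.
Qed.

End GcomplexLink.

Section PeriodicVertices.
Variables (G : Group) (X : complex) (A : Gcomplex G X).
Variables (fV : V X -> V X) (fD : D X -> D X).
Hypothesis fD_src : forall d, src (fD d) = fV (src d).
Hypothesis fD_rev : forall d, fD (rev d) = rev (fD d).
Hypothesis fD_link_inj : forall d d', src d = src d' -> fD d = fD d' -> d = d'.
Hypothesis fD_equiv : forall g d, fD (aD A g d) = aD A g (fD d).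

Lemma iter_fD_src n d : src (Nat.iter n fD d) = Nat.iter n fV (src d).
Proof. apply Nat.iter_swap_gen, fD_src. Qed.

Lemma iter_fD_rev n d : Nat.iter n fD (rev d) = rev (Nat.iter n fD d).
Proof. symmetry. apply Nat.iter_swap_gen. intro; symmetry; apply fD_rev. Qed.

Lemma iter_fD_link_inj n d d' :
  src d = src d' -> Nat.iter n fD d = Nat.iter n fD d' -> d = d'.
Proof.
  revert d d'; induction n as [|n IH]; simpl; intros d d' Es E; auto.
  apply IH; auto. apply fD_link_inj; auto. rewrite !iter_fD_src, Es. reflexivity.
Qed.

Lemma periodic_across_edge u d :
  finite_set (fun d : D X => src d = u) -> periodic (aV A) fV u -> src d = u ->
  periodic (aV A) fV (src (rev d)).
Proof.
  intros link_fin [k [h [k_pos Eh]]] Hd.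
  set (theta := fun x => aD A (ginv G h) (Nat.iter k fD x)).
  assert (theta_maps : forall x, src x = u -> src (theta x) = u).
  { intros x Hx. unfold theta.
    rewrite aD_src, iter_fD_src, Hx, Eh, (actK (act_oneV G X A) (act_mulV G X A)).
    reflexivity. }
  assert (theta_inj : forall x y, src x = u -> src y = u -> theta x = theta y -> x = y).
  { intros x y Hx Hy E. apply (act_inj (act_oneD G X A) (act_mulD G X A)) in E.
    apply (iter_fD_link_inj k); congruence. }
  destruct (finite_self_map_return _ theta link_fin theta_maps theta_inj d Hd)
    as [j [j_pos Ej]].
  destruct (twisted_iter_return (act_oneD G X A) (act_mulD G X A) fD fD_equiv
              k (ginv G h) j d Ej) as [g Eg].
  exists (k * j), g. split; [nia|].
  rewrite <- iter_fD_src, iter_fD_rev, Eg.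
  rewrite <- (cm_rev _ _ _ _ _ _ (act_cmap G X A g)), aD_src. reflexivity.
Qed.

Lemma periodic_everywhere :
  connected X -> (forall u : V X, finite_set (fun d : D X => src d = u)) ->
  finitely_many_orbits (aV A) -> forall v, periodic (aV A) fV v.
Proof.
  intros conn link_fin orbits v.
  destruct (periodic_iter_exists (act_oneV G X A) (act_mulV G X A) fV v orbits)
    as [a per_a].
  induction (conn (Nat.iter a fV v) v) as [x y [d [Hx Hy]]| |]; auto.
  subst. apply (periodic_across_edge (src d)); auto.
Qed.

End PeriodicVertices.

Theorem lemma6p10 (G : Group) (X : complex) (A : Gcomplex G X)
  (Xconn : connected X) (Aproper : proper_action A) (Acocpt : cocompact_action A)
  (fV : V X -> V X) (fD : D X -> D X) (fS : S X -> S X) (fF : F X -> F X) :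
  is_immersion X X fV fD fS fF ->
  equivariant A fV fD fS fF ->
  is_iso X X fV fD fS fF.
Proof.
  intros [f_cmap [link_inj corner_inj]] [eV [eD [_ eF]]].
  destruct Aproper as [stabV_fin _].
  destruct Acocpt as [orbitsV [orbitsD orbitsF]].
  assert (per : forall v, periodic (aV A) fV v).
  { apply (periodic_everywhere G X A fV fD (cm_src _ _ _ _ _ _ f_cmap)
             (cm_rev _ _ _ _ _ _ f_cmap) link_inj eD Xconn); auto.
    exact (finite_link G X A stabV_fin orbitsD). }
  assert (injV := equivariant_Injective
                    (act_oneV G X A) (act_mulV G X A) fV eV per stabV_fin).
  assert (injD := cmap_Injective_D f_cmap injV link_inj).
  assert (injS := cmap_Injective_S f_cmap injD corner_inj).
  assert (injF := cmap_Injective_F f_cmap injS).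
  assert (surjV := equivariant_Injective_Surjective
                     (act_oneV G X A) (act_mulV G X A) fV eV orbitsV injV).
  assert (surjD := equivariant_Injective_Surjective
                     (act_oneD G X A) (act_mulD G X A) fD eD orbitsD injD).
  assert (surjF := equivariant_Injective_Surjective
                     (act_oneF G X A) (act_mulF G X A) fF eF orbitsF injF).
  assert (surjS := cmap_Surjective_S f_cmap surjF).
  split; [exact f_cmap|].
  repeat split; apply bij_of_Injective_Surjective; assumption.
Qed.
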